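(* Let $\bm{N}=(N_0,\ldots,N_{n-1},-\sum_iN_i)$ and $\bm{M}=(M_0,\ldots,M_{n-1},-\sum_iM_i)$ with all $N_i,M_i\in\mathbb{Z}_{\ge0}$, and suppose $\sum_{i=0}^kN_i\ge\sum_{i=0}^kM_i$ for every $k=0,\ldots,n-1$. Then $K_n(\bm{N})\ge K_n(\bm{M})$.
   Context: $K_n(\bm{N})$ is the number of integer vectors $(f_{ij})_{0\le i<j\le n}\in\mathbb{Z}_{\ge0}^{\binom{n+1}{2}}$ with $\sum_{j>i} f_{ij}-\sum_{k<i} f_{ki}=N_i$ for every $i\in\{0,\ldots,n\}$. *)

From HB Require Import structures.
From mathcomp Require Import all_boot all_order all_algebra.
From mathcomp Require Import finmap.
From mathcomp Require Import boolp classical_sets cardinality.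
Set Implicit Arguments. Unset Strict Implicit. Unset Printing Implicit Defensive.
Import Order.TTheory GRing.Theory Num.Theory.
Local Open Scope ring_scope.

(* A flow vector (f_ij)_{0<=i<j<=n} of nonnegative integers, encoded as a finite
   function on pairs of indices in {0..n} that vanishes off the set {i < j}. *)
Definition flow_vec (n : nat) := {ffun 'I_n.+1 * 'I_n.+1 -> nat}.

Definition is_flow (n : nat) (N : 'I_n.+1 -> int) (f : flow_vec n) : Prop :=
  (forall i j : 'I_n.+1, ~~ (i < j)%N -> f (i, j) = 0%N) /\
  (forall i : 'I_n.+1,
      ((\sum_(j < n.+1 | (i < j)%N) (f (i, j))%:Z)
       - (\sum_(k < n.+1 | (k < i)%N) (f (k, i))%:Z))%R = N i).

Definition K (n : nat) (N : 'I_n.+1 -> int) : nat :=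
  #|` fset_set [set f : flow_vec n | is_flow N f] |.

(* (N_0, ..., N_{n-1}, - sum_i N_i) *)
Definition ext_vec (n : nat) (N : 'I_n -> nat) : 'I_n.+1 -> int :=
  fun i => match @insub nat (fun k => (k < n)%N) 'I_n (val i) with
           | Some i' => (N i')%:Z
           | None => - (\sum_(i' < n) (N i')%:Z)
           end.

(** Write [D_k = \sum_(i < k) (N_i - M_i)], which is nonnegative by hypothesis.
    Adding to a flow for [M] the path flow carrying [D_(k+1)] along each edge
    [(k, k+1)] changes the net outflow at [k] by [D_(k+1) - D_k = N_k - M_k]
    (and by [-D_n] at the sink), so it yields a flow for [N]; this addition is
    injective.  Counting makes sense because every flow is finite: the entries
    of a flow for [N] are bounded by [-\sum_i i N_i], which equals the sum of
    [(b - a) f_ab] over all edges [a < b]. *)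
From HB Require Import structures.
From mathcomp Require Import all_boot all_order all_algebra.
From mathcomp Require Import finmap.
From mathcomp Require Import boolp classical_sets cardinality.
From mathcomp Require Import zify.

Set Implicit Arguments.
Unset Strict Implicit.
Unset Printing Implicit Defensive.

Import Order.TTheory GRing.Theory Num.Theory.

Lemma leq_card_fset_set (T U : choiceType) (A : set T) (B : set U) (g : T -> U) :
  injective g -> finite_set A -> finite_set B -> (g @` A `<=` B)%classic ->
  (#|` fset_set A| <= #|` fset_set B|)%N.
Proof.
move=> g_inj finA finB gAB.
have -> : #|` fset_set A| = #|` (g @` fset_set A)%fset| by rewrite card_imfset.
rewrite -fset_set_image //.
by apply: fsubset_leq_card; rewrite -fset_set_sub //; exact: finite_image.
Qed.

Section Flows.
Local Open Scope ring_scope.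
Variable n : nat.
Implicit Types (N : 'I_n.+1 -> int) (f g : flow_vec n).

Section UpperSupported.
Variable f : flow_vec n.
Hypothesis f_upper : forall i j : 'I_n.+1, ~~ (i < j)%N -> f (i, j) = 0%N.

Lemma sum_outflowE (i : 'I_n.+1) :
  \sum_(j < n.+1 | (i < j)%N) (f (i, j))%:Z = \sum_(j < n.+1) (f (i, j))%:Z.
Proof.
rewrite [RHS](bigID (fun j : 'I_n.+1 => (i < j)%N)) /=.
by rewrite [X in _ + X]big1 ?addr0 // => j /f_upper ->.
Qed.

Lemma sum_inflowE (i : 'I_n.+1) :
  \sum_(k < n.+1 | (k < i)%N) (f (k, i))%:Z = \sum_(k < n.+1) (f (k, i))%:Z.
Proof.
rewrite [RHS](bigID (fun k : 'I_n.+1 => (k < i)%N)) /=.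
by rewrite [X in _ + X]big1 ?addr0 // => k /f_upper ->.
Qed.

Lemma flow_le_length (a b : 'I_n.+1) :
  (f (a, b))%:Z <= (b%:Z - a%:Z) * (f (a, b))%:Z.
Proof.
have [lt_ab | le_ba] := ltnP a b; last by rewrite f_upper ?mulr0 // -leqNgt.
by rewrite -[X in X <= _]mul1r ler_wpM2r //; lia.
Qed.

End UpperSupported.

Lemma flow_potential N f : is_flow N f ->
  \sum_(i < n.+1) i%:Z * N i =
  - \sum_(a < n.+1) \sum_(b < n.+1) (b%:Z - a%:Z) * (f (a, b))%:Z.
Proof.
move=> [f_upper balance].
under eq_bigr => i _ do
  rewrite -balance sum_outflowE // sum_inflowE // mulrBr !mulr_sumr.
rewrite sumrB [X in _ - X]exchange_big /= -sumrB -sumrN.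
apply: eq_bigr => a _; rewrite -sumrB -sumrN; apply: eq_bigr => b _.
by rewrite mulrBl opprB.
Qed.

Lemma flow_bound N f : is_flow N f ->
  forall p, (f p)%:Z <= - \sum_(i < n.+1) i%:Z * N i.
Proof.
move=> flow_f [a b]; have [f_upper _] := flow_f.
rewrite (flow_potential flow_f) opprK.
apply: le_trans (flow_le_length f_upper a b) _.
rewrite (bigD1 a) //= (bigD1 b) //= -addrA lerDl.
by apply: addr_ge0; apply: sumr_ge0 => i _; [|apply: sumr_ge0 => j _];
  exact: le_trans (flow_le_length f_upper _ _).
Qed.

Lemma finite_flows N : finite_set [set f : flow_vec n | is_flow N f].
Proof.
set B := `|- \sum_(i < n.+1) i%:Z * N i|%N.
pose to_flow (g : {ffun 'I_n.+1 * 'I_n.+1 -> 'I_B.+1}) : flow_vec n :=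
  [ffun p => nat_of_ord (g p)].
apply: (@sub_finite_set _ _ (range to_flow)).
  move=> f /= flow_f; exists [ffun p => inord (f p)] => //.
  apply/ffunP => p; rewrite !ffunE inordK //.
  by have := flow_bound flow_f p; rewrite /B; lia.
by apply: finite_image; exact: finite_finset.
Qed.

Lemma is_flowD N N' f g : is_flow N f -> is_flow N' g ->
  is_flow (fun i => N i + N' i) (f + g).
Proof.
move=> [f_upper f_bal] [g_upper g_bal]; split=> [i j ij | i].
  by rewrite ffunE f_upper ?g_upper.
under eq_bigr do rewrite ffunE PoszD.
under [X in _ - X]eq_bigr do rewrite ffunE PoszD.
by rewrite !big_split /= -f_bal -g_bal addrACA opprD.
Qed.

Lemma flow_vec_addIr g : injective (fun f => f + g : flow_vec n).
Proof.
move=> f1 f2 /ffunP eq_fg; apply/ffunP => p.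
by have := eq_fg p; rewrite !ffunE => /addIn.
Qed.

Definition path_flow (d : nat -> nat) : flow_vec n :=
  [ffun p : 'I_n.+1 * 'I_n.+1 => if (p.1 : nat).+1 == p.2 then d p.2 else 0%N].

Lemma is_flow_path_flow (d : nat -> nat) : d 0%N = 0%N ->
  is_flow (fun i => (if (i < n)%N then d i.+1 else 0%N)%:Z - (d i)%:Z)
          (path_flow d).
Proof.
move=> d0; have upper : forall i j : 'I_n.+1, ~~ (i < j)%N -> path_flow d (i, j) = 0%N.
  by move=> i j; rewrite ffunE /=; case: eqP => // <-; rewrite ltnSn.
split=> // i; rewrite sum_outflowE // sum_inflowE //.
under eq_bigr do rewrite ffunE /= fun_if eq_sym.
under [X in _ - X]eq_bigr do rewrite ffunE /= fun_if.
rewrite -!big_mkcond (big_ord1_eq _ (fun j => (d j)%:Z)) ltnS.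
congr (_ - _); first by case: ifP.
case: i => -[|i] lt_in /=; first by rewrite big_pred0 // d0.
rewrite (eq_bigl (fun k : 'I_n.+1 => (k : nat) == i)) => [|k]; last exact: eqSS.
by rewrite (big_ord1_eq _ (fun=> (d i.+1)%:Z)) ltnW.
Qed.

End Flows.

Section PrefixSums.
Variable n : nat.

Definition psum (F : 'I_n -> nat) (i : nat) : nat := \sum_(k < n | (k < i)%N) F k.

Lemma psum0 F : psum F 0 = 0%N.
Proof. exact: big_pred0. Qed.

Lemma psumS F (k : 'I_n) : psum F k.+1 = (psum F k + F k)%N.
Proof.
rewrite /psum (bigD1 k) ?ltnSn //= addnC; congr (_ + _)%N; apply: eq_bigl => j.
by rewrite ltnS ltn_neqAle andbC.
Qed.

Lemma psum_total F i : (n <= i)%N -> psum F i = \sum_(k < n) F k.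
Proof. by move=> le_ni; apply: eq_bigl => k; exact: leq_trans (ltn_ord k) le_ni. Qed.

Lemma ext_vecE F (i : 'I_n.+1) :
  ext_vec F i = ((if (i < n)%N then psum F i.+1 else 0%N)%:Z - (psum F i)%:Z)%R.
Proof.
rewrite /ext_vec; case: insubP => [k lt_in val_k | ge_in].
  have {lt_in} -> : (i < n)%N := lt_in; have {val_k} <- : (k : nat) = i := val_k.
  by rewrite psumS PoszD addrAC subrr add0r.
have {ge_in} ge_in : ~~ (i < n)%N := ge_in.
rewrite (negbTE ge_in) sub0r psum_total; last by rewrite leqNgt.
by rewrite (big_morph Posz PoszD (erefl (Posz 0))).
Qed.

Lemma leq_psum (N M : 'I_n -> nat) :
  (forall k : 'I_n, psum M k.+1 <= psum N k.+1)%N ->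
  forall i, (psum M i <= psum N i)%N.
Proof.
move=> le_MN; have le_small i : (i <= n)%N -> (psum M i <= psum N i)%N.
  by case: i => [_ | k lt_kn]; [rewrite !psum0 | exact: le_MN (Ordinal lt_kn)].
move=> i; have [/le_small // | /ltnW le_ni] := leqP i n.
by rewrite !(psum_total _ le_ni) -!(psum_total _ (leqnn n)); exact: le_small.
Qed.

End PrefixSums.

Theorem proposition2p8 (n : nat) (N M : 'I_n -> nat) :
  (forall k : 'I_n, \sum_(i < n | (i <= k)%N) M i <= \sum_(i < n | (i <= k)%N) N i) ->
  K (ext_vec M) <= K (ext_vec N).
Proof.
move=> /leq_psum le_MN; pose d i := (psum N i - psum M i)%N.
have ext_vecN : ext_vec N =
    (fun i => ext_vec M i + ((if (i < n)%N then d i.+1 else 0%N)%:Z - (d i)%:Z))%R.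
  apply: funext => i; rewrite !ext_vecE /d.
  by have := le_MN i; have := le_MN i.+1; case: (i < n)%N; lia.
rewrite /K; apply: (leq_card_fset_set (@flow_vec_addIr _ (path_flow n d)));
  [exact: finite_flows | exact: finite_flows |].
move=> _ [f flow_f <-]; rewrite /= ext_vecN.
have d0 : d 0%N = 0%N by rewrite /d !psum0.
exact: is_flowD flow_f (is_flow_path_flow n d0).
Qed.
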